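(* Let $n$ be a positive integer and let $\pi$ be chosen uniformly at random from the permutations of $[n]$ all of whose cycle lengths are odd. For an odd positive integer $k\le n$, let $Y_k$ be the number of elements of $[n]$ lying in $k$-cycles of $\pi$. Then \[ \mathbb{E}_o^{(n)}Y_k=\begin{cases}\dfrac{n(n-2)\cdots(n-k+1)}{(n-1)(n-3)\cdots(n-k)}, & n\text{ even},\\[2ex] \dfrac{(n-1)(n-3)\cdots(n-k+2)}{(n-2)(n-4)\cdots(n-k+1)}, & n\text{ odd},\end{cases} \] where an empty product equals $1$.
   Context: $\mathbb{E}_o^{(n)}$ denotes expectation under the uniform measure on permutations of $[n]$ with all cycle lengths odd. $Y_k=kX_k$, where $X_k$ is the number of $k$-cycles. *)

From mathcomp Require Import all_boot all_order all_algebra all_fingroup.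
Set Implicit Arguments. Unset Strict Implicit. Unset Printing Implicit Defensive.
Import GRing.Theory Num.Theory.
Local Open Scope ring_scope.

Definition cycle_len n (s : 'S_n) (x : 'I_n) : nat := #|porbit s x|.

Definition odd_cycle_perms n : {set 'S_n} :=
  [set s : 'S_n | [forall x, odd (cycle_len s x)]].

Definition Yk n (k : nat) (s : 'S_n) : nat :=
  #|[set x : 'I_n | cycle_len s x == k]|.

Definition EoY n (k : nat) : rat :=
  (\sum_(s in odd_cycle_perms n) (Yk k s)%:R) / (#|odd_cycle_perms n|)%:R.

(* Putting a new point right after some y in the cycle structure of s in S_{m+1}, or making
   it a fixed point, is a bijection S_{m+1} x [m+2] -> S_{m+2} that lengthens the cycle of y
   by one and leaves the other cycles alone.  Let O_m count the odd-cycle permutations of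
   [m] and C_m(P) those permutations of [m+1] whose cycle through a marked point has length
   in P while all other cycles are odd.  The bijection gives
     C_{m+1}(P) = P(1) O_{m+1} + (m+1) C_m(P(. + 1)).
   Hence a given point of [n] lies in a k-cycle of (n-1)(n-2)...(n-k+1) O_{n-k} odd-cycle
   permutations, and O_{m+2} = O_{m+1} + (m+1) m O_m, i.e. O_q = f(q) O_{q-1} with f(q) the
   largest odd number <= q.  Summing over the marked point,
     E Y_k = n(n-1)...(n-k+1) O_{n-k} / O_n = prod_{n-k < q <= n} q / f(q),
   whose factors are 1 for q odd and q / (q-1) for q even. *)

From mathcomp Require Import all_boot all_order all_algebra all_fingroup.
From mathcomp Require Import zify.
Set Implicit Arguments. Unset Strict Implicit. Unset Printing Implicit Defensive.
Import GRing.Theory Num.Theory.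

Section PermOrbits.
Variable T : finType.
Implicit Types (s t : {perm T}) (x z : T).

Lemma porbit_stable s x z : z \in porbit s x -> s z \in porbit s x.
Proof. by case/porbitP=> i ->; rewrite -permM -expgSr mem_porbit. Qed.

Lemma porbit_sub_closed s (A : {set T}) x :
  {in A, forall z, s z \in A} -> x \in A -> porbit s x \subset A.
Proof.
move=> sA xA; apply/subsetP=> _ /porbitP[i ->]; elim: i => [|i IH].
  by rewrite expg0 perm1.
by rewrite expgSr permM; apply: sA.
Qed.

Lemma porbit_of_mem s x z : z \in porbit s x -> porbit s z = porbit s x.
Proof. by rewrite -eq_porbit_mem => /eqP. Qed.

Lemma porbit_fixed s x : s x = x -> porbit s x = [set x].
Proof.
move=> sx; apply/eqP; rewrite eqEsubset sub1set porbit_id andbT.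
by apply: porbit_sub_closed; rewrite ?set11 // => z /set1P ->; rewrite sx set11.
Qed.

Lemma porbit_eq_on s t x : {in porbit s x, s =1 t} -> porbit s x = porbit t x.
Proof.
move=> st; have st_exp i : (s ^+ i)%g x = (t ^+ i)%g x.
  elim: i => [|i IH]; first by rewrite !expg0.
  by rewrite !expgSr !permM -IH st ?mem_porbit.
by apply/setP=> z; apply/porbitP/porbitP=> -[i ->]; exists i.
Qed.

End PermOrbits.

Lemma porbit_morph (T U : finType) (s : {perm T}) (t : {perm U}) (h : T -> U) x :
  (forall w, t (h w) = h (s w)) -> porbit t (h x) = h @: porbit s x.
Proof.
move=> th; apply/eqP; rewrite eqEsubset; apply/andP; split.
  apply: porbit_sub_closed; last exact/imset_f/porbit_id.
  by move=> _ /imsetP[w wP ->]; rewrite th imset_f ?porbit_stable.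
have: porbit s x \subset [set w | h w \in porbit t (h x)].
  apply: porbit_sub_closed; last by rewrite inE porbit_id.
  by move=> w; rewrite !inE -th; apply: porbit_stable.
move/subsetP=> sub; apply/subsetP=> _ /imsetP[w /sub + ->].
by rewrite inE.
Qed.

Lemma cycle_len_of_mem n (s : 'S_n) x z :
  z \in porbit s x -> cycle_len s z = cycle_len s x.
Proof. by rewrite /cycle_len => /porbit_of_mem ->. Qed.

Lemma cycle_len_conj n (s g : 'S_n) x : cycle_len (s ^ g)%g (g x) = cycle_len s x.
Proof.
rewrite /cycle_len (porbit_morph (s := s)) ?card_imset //; first exact: perm_inj.
by move=> w; rewrite permJ.
Qed.

Definition odd_except n (P : pred nat) (s : 'S_n) (y : 'I_n) : bool :=
  P (cycle_len s y) && [forall x, (x \notin porbit s y) ==> odd (cycle_len s x)].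

Section OddExcept.
Variables (n : nat) (P : pred nat).
Implicit Types (s g : 'S_n) (x y z : 'I_n).

Lemma odd_exceptE s y : (forall l, P l -> odd l) ->
  odd_except P s y = P (cycle_len s y) && (s \in odd_cycle_perms n).
Proof.
move=> Podd; rewrite /odd_except inE; case Py: (P _) => //=.
apply/forallP/forallP => oddP x; last exact/implyP.
have := oddP x; case: (boolP (x \in porbit s y)) => //= xy _.
by rewrite (cycle_len_of_mem xy) Podd.
Qed.

Lemma odd_except_conj s g y : odd_except P (s ^ g)%g (g y) = odd_except P s y.
Proof.
have gP : porbit (s ^ g)%g (g y) = g @: porbit s y.
  by apply: porbit_morph => w; rewrite permJ.
rewrite /odd_except cycle_len_conj gP; congr (_ && _).
apply/forallP/forallP => oddP x.
  by have := oddP (g x); rewrite mem_imset ?cycle_len_conj //; apply: perm_inj.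
by rewrite -(permKV g x) mem_imset ?cycle_len_conj //; apply: perm_inj.
Qed.

Lemma card_odd_except_at y z :
  #|[set s | odd_except P s y]| = #|[set s | odd_except P s z]|.
Proof.
have ->: [set s | odd_except P s z] = (conjg^~ (tperm y z)) @: [set s | odd_except P s y].
  apply/setP=> u; rewrite inE; apply/idP/imsetP => [uz | [s]].
    exists (u ^ tperm y z)%g; last by rewrite -{1}(tpermV y z) conjgKV.
    by rewrite inE -[in X in odd_except _ _ X](tpermR y z) odd_except_conj.
  by rewrite inE => sy ->; rewrite -[in X in odd_except _ _ X](tpermL y z) odd_except_conj.
by rewrite card_imset //; apply: conjg_inj.
Qed.

End OddExcept.

Section Insertion.
Variable m : nat.
Implicit Types (s : 'S_m.+1) (x : 'I_m.+1) (y z : 'I_m.+2).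

Definition extend_perm s : 'S_m.+2 := lift_perm ord_max ord_max s.

(* The new point [ord_max] is put right after [p.2] in its cycle; [p.2 = ord_max] makes it a
   fixed point. *)
Definition insert_after (p : 'S_m.+1 * 'I_m.+2) : 'S_m.+2 :=
  (tperm p.2 ord_max * extend_perm p.1)%g.

Lemma extend_perm_lift s x : extend_perm s (lift ord_max x) = lift ord_max (s x).
Proof. exact: lift_perm_lift. Qed.

Lemma extend_perm_max s : extend_perm s ord_max = ord_max.
Proof. exact: lift_perm_id. Qed.

Lemma max_notin_lift (A : {set 'I_m.+1}) : ord_max \notin lift ord_max @: A.
Proof. by apply/imsetP=> -[w _ /eqP]; rewrite (negbTE (neq_lift _ _)). Qed.

Lemma extend_perm_inj : injective extend_perm.
Proof.
move=> s t est; apply/permP => x; apply: (@lift_inj _ ord_max).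
by rewrite -!extend_perm_lift est.
Qed.

Lemma porbit_extend_lift s x :
  porbit (extend_perm s) (lift ord_max x) = lift ord_max @: porbit s x.
Proof. by apply: porbit_morph => w; rewrite extend_perm_lift. Qed.

Lemma cycle_len_extend_lift s x :
  cycle_len (extend_perm s) (lift ord_max x) = cycle_len s x.
Proof. by rewrite /cycle_len porbit_extend_lift card_imset //; apply: lift_inj. Qed.

Lemma porbit_extend_max s : porbit (extend_perm s) ord_max = [set ord_max].
Proof. exact/porbit_fixed/extend_perm_max. Qed.

Lemma insert_afterE s y z : insert_after (s, y) z = extend_perm s (tperm y ord_max z).
Proof. by rewrite permM. Qed.

Lemma insert_after_root s y : insert_after (s, y) y = ord_max.
Proof. by rewrite insert_afterE tpermL extend_perm_max. Qed.

Lemma insert_after_max s y : insert_after (s, y) ord_max = extend_perm s y.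
Proof. by rewrite insert_afterE tpermR. Qed.

Lemma insert_after_other s y z :
  z != y -> z != ord_max -> insert_after (s, y) z = extend_perm s z.
Proof. by move=> zy zm; rewrite insert_afterE tpermD // eq_sym. Qed.

Lemma root_in_porbit_insert_after s y : y \in porbit (insert_after (s, y)) ord_max.
Proof. by rewrite porbit_sym -{1}(insert_after_root s y); apply: (mem_porbit _ 1). Qed.

Lemma insert_after_inj : injective insert_after.
Proof.
move=> [s1 y1] [s2 y2] eq12.
have ey : y1 = y2.
  by apply: (@perm_inj _ (insert_after (s2, y2))); rewrite -{1}eq12 !insert_after_root.
by move: eq12; rewrite /insert_after /= ey => /mulgI /extend_perm_inj ->.
Qed.

Lemma card_insert_after (Q : pred 'S_m.+2) :
  #|[set f | Q f]| = #|[set p | Q (insert_after p)]|.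
Proof.
have bij : bijective insert_after.
  apply: inj_card_bij insert_after_inj _.
  by rewrite card_prod !card_Sn !card_ord factS mulnC.
rewrite -(on_card_preimset (onW_bij _ bij)).
by apply: eq_card => p; rewrite !inE.
Qed.

Lemma odd_except_insert_max (P : pred nat) s :
  odd_except P (insert_after (s, ord_max)) ord_max =
  P 1 && (s \in odd_cycle_perms m.+1).
Proof.
rewrite /insert_after tperm1 mul1g /odd_except porbit_extend_max.
have -> : cycle_len (extend_perm s) ord_max = 1.
  by rewrite /cycle_len porbit_extend_max cards1.
congr (_ && _); rewrite inE; apply/forallP/forallP => oddP x.
  have := oddP (lift ord_max x).
  by rewrite inE eq_sym (negbTE (neq_lift _ _)) cycle_len_extend_lift.
case: (unliftP ord_max x) => [x' -> | ->]; last by rewrite set11.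
by rewrite cycle_len_extend_lift oddP implybT.
Qed.

Section InsertAfterLift.
Variables (s : 'S_m.+1) (a : 'I_m.+1).
Let f := insert_after (s, lift ord_max a).

Lemma porbit_insert_after_max :
  porbit f ord_max = ord_max |: lift ord_max @: porbit s a.
Proof.
rewrite -porbit_extend_lift; set e := extend_perm s; set a1 := lift ord_max a.
have maxNe : ord_max \notin porbit e a1.
  by rewrite porbit_extend_lift max_notin_lift.
have a1f : a1 \in porbit f ord_max by apply: root_in_porbit_insert_after.
apply/eqP; rewrite eqEsubset subUset sub1set porbit_id /=; apply/andP; split.
  apply: porbit_sub_closed; last by rewrite setU11.
  move=> z; rewrite !inE => /orP[/eqP -> | ze].
    by rewrite insert_after_max porbit_stable ?porbit_id ?orbT.
  have [-> | za] := eqVneq z a1; first by rewrite insert_after_root eqxx.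
  have zm : z != ord_max by apply: contraNneq maxNe => <-.
  by rewrite insert_after_other // porbit_stable ?orbT.
apply: porbit_sub_closed a1f => z zf.
have [-> | zm] := eqVneq z ord_max; first by rewrite /e extend_perm_max porbit_id.
have [-> | za] := eqVneq z a1; first by rewrite -insert_after_max porbit_stable ?porbit_id.
by rewrite -(insert_after_other s za zm) porbit_stable.
Qed.

Lemma porbit_insert_after_other z :
  z \notin porbit f ord_max -> porbit f z = porbit (extend_perm s) z.
Proof.
move=> zN; apply: porbit_eq_on => w wz.
have wN : w \notin porbit f ord_max by rewrite -eq_porbit_mem (porbit_of_mem wz) eq_porbit_mem.
apply: insert_after_other; apply: contraNneq wN => ->.
  exact: root_in_porbit_insert_after.
exact: porbit_id.
Qed.

Lemma odd_except_insert_lift (P : pred nat) :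
  odd_except P f ord_max = odd_except (fun l => P l.+1) s a.
Proof.
have lift_mem x : (lift ord_max x \in porbit f ord_max) = (x \in porbit s a).
  rewrite porbit_insert_after_max !inE eq_sym (negbTE (neq_lift _ _)) mem_imset //.
  exact: lift_inj.
have len_off x : x \notin porbit s a -> cycle_len f (lift ord_max x) = cycle_len s x.
  by rewrite -lift_mem /cycle_len => /porbit_insert_after_other ->; apply: cycle_len_extend_lift.
rewrite /odd_except; have -> : cycle_len f ord_max = (cycle_len s a).+1.
  rewrite /cycle_len porbit_insert_after_max cardsU1 card_imset; last exact: lift_inj.
  by rewrite max_notin_lift.
congr (_ && _); apply/forallP/forallP => oddP x.
  by have := oddP (lift ord_max x); rewrite lift_mem; case: (boolP (x \in _)) => //= /len_off ->.
case: (unliftP ord_max x) => [x' -> | ->]; last by rewrite porbit_id.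
by rewrite lift_mem; apply/implyP => /[dup] /len_off -> /(implyP (oddP x')).
Qed.

End InsertAfterLift.
End Insertion.

Lemma card_sum_nat (T : finType) (A : {pred T}) : #|A| = \sum_x (x \in A : nat).
Proof. by rewrite -sum1_card big_mkcond; apply: eq_bigr => x _; case: (x \in A). Qed.

Definition count_odd_except m (P : pred nat) :=
  #|[set s : 'S_m.+1 | odd_except P s ord_max]|.

Lemma eq_count_odd_except m (P Q : pred nat) :
  P =1 Q -> count_odd_except m P = count_odd_except m Q.
Proof. by move=> PQ; apply: eq_card => s; rewrite !inE /odd_except PQ. Qed.

Lemma count_odd_exceptS m (P : pred nat) :
  count_odd_except m.+1 P =
  P 1 * #|odd_cycle_perms m.+1| + m.+1 * count_odd_except m (fun l => P l.+1).
Proof.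
rewrite /count_odd_except card_insert_after card_sum_nat.
transitivity (\sum_s \sum_(y < m.+2) (odd_except P (insert_after (s, y)) ord_max : nat)).
  by rewrite pair_big; apply: eq_bigr => -[s y]; rewrite inE.
under eq_bigr => s _.
  rewrite (bigD1_ord ord_max) //= odd_except_insert_max.
  under eq_bigr => y _ do rewrite odd_except_insert_lift.
  over.
rewrite big_split /= exchange_big /=; congr (_ + _).
  rewrite [#|_|]card_sum_nat big_distrr /=.
  by apply: eq_bigr => s _; case: (P 1); rewrite ?mul1n.
rewrite (eq_bigr (fun=> count_odd_except m (fun l => P l.+1))) ?sum_nat_const ?card_ord //.
move=> y _; rewrite /count_odd_except (card_odd_except_at _ ord_max y) card_sum_nat.
by apply: eq_bigr => s _; rewrite inE.
Qed.

Lemma count_odd_except0 (P : pred nat) : count_odd_except 0 P = P 1.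
Proof.
have len1 (s : 'S_1) x : cycle_len s x = 1.
  apply/eqP; rewrite eqn_leq lt0n card_porbit_neq0 andbT.
  by rewrite -[X in _ <= X](card_ord 1) max_card.
rewrite /count_odd_except card_sum_nat (eq_bigr (fun=> P 1 : nat)).
  by rewrite sum_nat_const card_Sn mul1n.
move=> s _; rewrite inE /odd_except len1.
suff -> : [forall x, (x \notin porbit s ord_max) ==> odd (cycle_len s x)] by rewrite andbT.
by apply/forallP => x; rewrite len1 implybT.
Qed.

Lemma card_odd_cycle_perms0 : #|odd_cycle_perms 0| = 1.
Proof.
suff -> : odd_cycle_perms 0 = setT by rewrite cardsT card_Sn.
by apply/setP => s; rewrite !inE; apply/forallP => -[].
Qed.

Lemma card_odd_cycle_perms_count m :
  #|odd_cycle_perms m.+1| = count_odd_except m odd.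
Proof.
apply: eq_card => s; rewrite [in RHS]inE odd_exceptE //.
by apply/idP/andP => [sO | []//]; split=> //; move: sO; rewrite inE => /forallP.
Qed.

Lemma count_cycle_len m j :
  (j <= m)%N -> count_odd_except m (pred1 j.+1) = m ^_ j * #|odd_cycle_perms (m - j)|.
Proof.
elim: j m => [|j IH] [|m] //= jm.
- by rewrite count_odd_except0 card_odd_cycle_perms0.
- rewrite count_odd_exceptS (@eq_count_odd_except _ _ (pred1 0)) //.
  have -> : count_odd_except m (pred1 0) = 0.
    apply/eqP; rewrite cards_eq0; apply/eqP/setP => s; rewrite !inE /odd_except.
    by rewrite /= /cycle_len (negbTE (card_porbit_neq0 _ _)).
  by rewrite muln0 addn0 subn0.
- rewrite count_odd_exceptS /= mul0n add0n (@eq_count_odd_except _ _ (pred1 j.+1)) //.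
  by rewrite IH // ffactSS subSS mulnA.
Qed.

Lemma count_even_cycle m :
  count_odd_except m (fun l => odd l.+1) = m * #|odd_cycle_perms m|.
Proof.
case: m => [|m]; first by rewrite count_odd_except0.
rewrite count_odd_exceptS /= mul0n add0n card_odd_cycle_perms_count.
by congr (_ * _); apply: eq_count_odd_except => l /=; rewrite negbK.
Qed.

Lemma card_odd_cycle_permsSS m :
  #|odd_cycle_perms m.+2| = #|odd_cycle_perms m.+1| + m.+1 * m * #|odd_cycle_perms m|.
Proof.
by rewrite card_odd_cycle_perms_count count_odd_exceptS count_even_cycle mul1n mulnA.
Qed.

Definition odd_floor q := if odd q then q else q.-1.

Lemma card_odd_cycle_permsS p :
  #|odd_cycle_perms p.+1| = odd_floor p.+1 * #|odd_cycle_perms p|.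
Proof.
suff: #|odd_cycle_perms p.+1| = odd_floor p.+1 * #|odd_cycle_perms p| /\
      #|odd_cycle_perms p.+2| = odd_floor p.+2 * #|odd_cycle_perms p.+1| by case.
elim: p => [|p [IH1 IH2]].
  by rewrite card_odd_cycle_permsSS card_odd_cycle_perms_count count_odd_except0
             card_odd_cycle_perms0.
split=> //; rewrite card_odd_cycle_permsSS IH2 IH1 /odd_floor /=.
by case: (odd p) => /=; lia.
Qed.

Lemma card_odd_cycle_perms_gt0 p : (0 < #|odd_cycle_perms p|)%N.
Proof.
apply/card_gt0P; exists 1%g; rewrite inE; apply/forallP => x.
by rewrite /cycle_len porbit_fixed ?perm1 // cards1.
Qed.

Lemma card_odd_cycle_perms_prod n k : (k <= n)%N ->
  #|odd_cycle_perms n| = #|odd_cycle_perms (n - k)| * \prod_(i < k) odd_floor (n - i).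
Proof.
elim: k => [|k IH] kn; first by rewrite subn0 big_ord0 muln1.
have nk : n - k = (n - k.+1).+1 by lia.
rewrite IH 1?ltnW // nk card_odd_cycle_permsS -nk big_ord_recr /=.
by rewrite -mulnA mulnCA [_ * odd_floor _]mulnC.
Qed.

Lemma sum_Yk m k : odd k ->
  \sum_(s in odd_cycle_perms m.+1) Yk k s = m.+1 * count_odd_except m (pred1 k).
Proof.
move=> ok; under eq_bigr => s _ do rewrite /Yk card_sum_nat.
rewrite exchange_big (eq_bigr (fun=> count_odd_except m (pred1 k))) ?sum_nat_const ?card_ord //.
move=> x _; rewrite /count_odd_except (card_odd_except_at _ ord_max x) card_sum_nat big_mkcond.
apply: eq_bigr => s _; rewrite [in RHS]inE odd_exceptE; last by move=> l /eqP ->.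
by case: (s \in odd_cycle_perms _); rewrite ?inE ?andbT ?andbF.
Qed.

Lemma big_ord_double_succ (R : Type) (idx : R) (op : Monoid.com_law idx) r (F : nat -> R) :
  \big[op/idx]_(i < r.*2.+1) F i =
  op (\big[op/idx]_(i < r.+1) F i.*2) (\big[op/idx]_(i < r) F i.*2.+1).
Proof.
elim: r => [|r IH]; first by rewrite double0 !big_ord1 big_ord0 Monoid.mulm1.
rewrite (big_ord_recr r.+1 (fun i => F i.*2)) (big_ord_recr r (fun i => F i.*2.+1)).
rewrite doubleS [LHS]big_ord_recr [in LHS]big_ord_recr /= IH.
by rewrite Monoid.mulmAC -Monoid.mulmA Monoid.mulmACA.
Qed.

Local Open Scope ring_scope.

Lemma ratio_odd_floor_sub (F : numFieldType) n j : (j < n)%N ->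
  ((n - j)%N%:R : F) / (odd_floor (n - j))%:R =
  if odd n (+) odd j then 1 else (n%:R - j%:R) / (n%:R - j.+1%:R).
Proof.
move=> jn; rewrite /odd_floor -oddB; last exact: ltnW.
case: ifP => _.
  by rewrite divff // pnatr_eq0 -lt0n subn_gt0.
rewrite -subnS !natrB //; exact: ltnW.
Qed.

Lemma EoY_prod n k : odd k -> (k <= n)%N ->
  EoY n k = \prod_(i < k) ((n - i)%N%:R / (odd_floor (n - i))%:R).
Proof.
case: k => [//|j] oj; case: n => [//|m] jm.
rewrite /EoY -natr_sum (sum_Yk _ oj) count_cycle_len // mulnA -ffactSS -subSS.
rewrite (card_odd_cycle_perms_prod jm) ffact_prod prodf_div -!natr_prod !natrM.
rewrite [in X in _ / X]mulrC -mulf_div divff ?mulr1 // pnatr_eq0 -lt0n.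
exact: card_odd_cycle_perms_gt0.
Qed.

Theorem proposition3p2 (n k : nat) :
  (0 < n)%N -> odd k -> (k <= n)%N ->
  EoY n k =
  if odd n then
    (\prod_(i < k./2) ((n%:R : rat) - (2 * i + 1)%:R)) /
    (\prod_(i < k./2) ((n%:R : rat) - (2 * i + 2)%:R))
  else
    (\prod_(i < k.+1./2) ((n%:R : rat) - (2 * i)%:R)) /
    (\prod_(i < k.+1./2) ((n%:R : rat) - (2 * i + 1)%:R)).
Proof.
move=> _ ok kn; set r := k./2.
have hk : k = r.*2.+1 by rewrite -[k in LHS]odd_double_half ok.
have -> : k.+1./2 = r.+1 by rewrite hk -doubleS doubleK.
rewrite EoY_prod // hk.
rewrite (big_ord_double_succ _ _ (fun i => (n - i)%N%:R / (odd_floor (n - i))%:R)) /=.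
have rn : (r.*2 < n)%N by rewrite -ltnS -hk.
rewrite (eq_bigr (fun i : 'I_r.+1 => if odd n then 1
           else (n%:R - (2 * i)%:R) / (n%:R - (2 * i + 1)%:R))); last first.
  move=> i _; rewrite ratio_odd_floor_sub ?odd_double ?addbF ?mul2n ?addn1 //.
  by apply: leq_ltn_trans rn; rewrite leq_double -ltnS.
rewrite (eq_bigr (fun i : 'I_r => if odd n
           then (n%:R - (2 * i + 1)%:R) / (n%:R - (2 * i + 2)%:R) else 1)); last first.
  move=> i _; rewrite ratio_odd_floor_sub /= ?odd_double ?addbT ?if_neg ?mul2n ?addn1 ?addn2 //.
  by apply: leq_ltn_trans rn; rewrite ltn_double.
by case: (odd n); rewrite big1_eq ?mul1r ?mulr1 prodf_div.
Qed.
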